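(* Let $A$, $c$, $d$ be positive integers such that $A^2 - 2cA - d$ is the square of an integer. Then $2A \leq (c+1)^2 + d$. *)

From Stdlib Require Import ZArith Lia.

From Stdlib Require Import ZArith Lia.
Open Scope Z_scope.

(* Completing the square, the hypothesis reads (A - c)^2 - m^2 = c^2 + d, so
   c^2 + d factors as (A - c - m)(A - c + m).  Both factors are positive, and
   two integers u, v >= 1 satisfy u + v <= u v + 1; the sum of the factors is
   2 (A - c). *)

Lemma Zadd_le_mul_succ (u v : Z) : 1 <= u -> 1 <= v -> u + v <= u * v + 1.
Proof. intros hu hv; nia. Qed.

Lemma Zmul_add_pos (u v : Z) : 0 < u * v -> 0 < u + v -> 0 < u /\ 0 < v.
Proof. intros; nia. Qed.

Lemma Zdouble_le_of_sq_sub_sq (x k n : Z) :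
  0 < x -> 0 < n -> x ^ 2 - k ^ 2 = n -> 2 * x <= n + 1.
Proof.
  intros hx hn hxk.
  assert (hfactor : (x - k) * (x + k) = n) by (rewrite <- hxk; ring).
  destruct (Zmul_add_pos (x - k) (x + k)) as [hu hv]; [lia | lia |].
  pose proof (Zadd_le_mul_succ (x - k) (x + k)) as hsum.
  lia.
Qed.

Lemma Zlt_of_sq_sub_pos (A c : Z) : 0 < A -> 0 < A ^ 2 - 2 * c * A -> 2 * c < A.
Proof. intros; nia. Qed.

Theorem lemma4 (A c d : Z) (hA : 0 < A) (hc : 0 < c) (hd : 0 < d)
  (hsq : exists m : Z, A ^ 2 - 2 * c * A - d = m ^ 2) :
  2 * A <= (c + 1) ^ 2 + d.
Proof.
  destruct hsq as [m hm].
  assert (hcA : 2 * c < A) by (apply Zlt_of_sq_sub_pos; nia).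
  assert (hbound : 2 * (A - c) <= c ^ 2 + d + 1).
  { apply (Zdouble_le_of_sq_sub_sq (A - c) m); [lia | nia | rewrite <- hm; ring]. }
  nia.
Qed.
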